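(* Let $\mathbb{P}$ be a pre-Pawlikowski lattice satisfying $\mathsf{S}_1(\mathbb{V}_1,\mathbb{V}_1)$. Let $(F_n)_{n\in\omega}$ be a sequence of finite subsets of $\mathbb{P}$ such that for every $p\in\mathbb{P}\setminus\{1\}$ there are infinitely many $n$ with $\sup F_n\not\leq p$. Then there are elements $f_n\in F_n$, $n\in\omega$, such that $\sup_{n\in\omega}f_n=1$.
   Context: A lattice is a poset where any two elements have a supremum and an infimum; it is bounded if it has a minimum $0$ and a maximum $1$. A prime element is $q\neq 1$ with: $a\wedge b\leq q$ implies $a\leq q$ or $b\leq q$. Enough prime elements: whenever $a\not\leq b$ there is a prime $q$ with $b\leq q$, $a\not\leq q$. A pre-Pawlikowski lattice is a bounded lattice with enough prime elements. $\mathbb{V}_1$ is the family of subsets $A\subseteq\mathbb{P}$ with $\sup A=1$. $\mathsf{S}_1(\mathbb{V}_1,\mathbb{V}_1)$ means: for every sequence $(A_n)_{n\in\omega}$ of members of $\mathbb{V}_1$ there are $a_n\in A_n$ with $\sup\{a_n:n\in\omega\}=1$. For a finite set $F$, $\sup F$ denotes its join. *)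

From HB Require Import structures.
From mathcomp Require Import all_boot all_order.
Set Implicit Arguments. Unset Strict Implicit. Unset Printing Implicit Defensive.
Import Order.Theory.
Local Open Scope order_scope.

(* Bounded lattices are mathcomp's [tbLatticeType d]; 0 = \bot, 1 = \top. *)

Definition is_sup {d : Order.disp_t} {T : porderType d} (A : T -> Prop) (x : T) : Prop :=
  (forall a, A a -> a <= x) /\ (forall y, (forall a, A a -> a <= y) -> x <= y).

Definition sup_is_top {d : Order.disp_t} {T : tbLatticeType d} (A : T -> Prop) : Prop :=
  is_sup A \top.

Definition prime_elt {d : Order.disp_t} {T : tbLatticeType d} (q : T) : Prop :=
  q != \top /\ forall a b : T, a `&` b <= q -> a <= q \/ b <= q.

Definition enough_primes {d : Order.disp_t} {T : tbLatticeType d} : Prop :=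
  forall a b : T, ~~ (a <= b) -> exists q : T, prime_elt q /\ b <= q /\ ~~ (a <= q).

Definition pre_Pawlikowski {d : Order.disp_t} (T : tbLatticeType d) : Prop :=
  @enough_primes d T.

Definition S1_V1_V1 {d : Order.disp_t} (T : tbLatticeType d) : Prop :=
  forall A : nat -> (T -> Prop),
    (forall n, sup_is_top (A n)) ->
    exists a : nat -> T, (forall n, A n (a n)) /\ sup_is_top (fun x => exists n, x = a n).

From HB Require Import structures.
From mathcomp Require Import all_boot all_order.
From Stdlib Require Import ClassicalEpsilon.
Import Order.Theory.

(* Let C_j be the set of meets of j+1 elements taken from j+1 distinct sets
   F_n.  If an upper bound y of C_j were not 1, take a prime q >= y: for
   infinitely many n some element of F_n is not below q, and the meet of
   j+1 such elements lies in C_j, hence below q, which primality forbids.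
   So sup C_j = 1 for every j, and S_1(V_1, V_1) picks a_j in C_j with
   sup a_j = 1.  Since a_j is a meet over j+1 distinct indices, we can
   greedily pick for each j one of its factors x_j in F_(n_j) with the n_j
   pairwise distinct; setting f_(n_j) = x_j gives a_j <= f_(n_j), hence
   sup f_n = 1. *)

Section DistinctRepresentatives.

Variables (I K : eqType) (key : I -> K) (S : nat -> seq I) (x0 : I).
Hypotheses (S_uniq : forall j, uniq (map key (S j)))
           (S_large : forall j, j < size (S j)).

Definition fresh_pick j (used : seq K) : I :=
  nth x0 (S j) (find (fun i => key i \notin used) (S j)).

Lemma fresh_pickP j used : size used <= j ->
  fresh_pick j used \in S j /\ key (fresh_pick j used) \notin used.
Proof.
move=> used_small.
have has_fresh : has (fun i => key i \notin used) (S j).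
  apply: contraT => /hasPn all_used.
  have keys_used : {subset map key (S j) <= used}.
    by move=> _ /mapP[i /all_used + ->]; rewrite negbK.
  have := leq_trans (uniq_leq_size (S_uniq j) keys_used) used_small.
  by rewrite size_map leqNgt S_large.
rewrite /fresh_pick; split; first by rewrite mem_nth // -has_find.
by have := nth_find x0 has_fresh.
Qed.

Fixpoint used_keys j : seq K :=
  if j is j'.+1 then rcons (used_keys j') (key (fresh_pick j' (used_keys j')))
  else [::].

Definition representative j : I := fresh_pick j (used_keys j).

Lemma size_used_keys j : size (used_keys j) = j.
Proof. by elim: j => //= j IHj; rewrite size_rcons IHj. Qed.

Lemma representative_mem j : representative j \in S j.
Proof. by case: (fresh_pickP _ _ (eq_leq (size_used_keys j))). Qed.

Lemma key_representative_used i j :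
  i < j -> key (representative i) \in used_keys j.
Proof.
elim: j => // j IHj; rewrite ltnS leq_eqVlt => /orP[/eqP -> | lt_ij] /=.
  by rewrite mem_rcons mem_head.
by rewrite mem_rcons in_cons IHj ?orbT.
Qed.

Lemma key_representative_inj : injective (key \o representative).
Proof.
have not_used j : key (representative j) \notin used_keys j.
  by case: (fresh_pickP _ _ (eq_leq (size_used_keys j))).
move=> i j /= eq_key; case: (ltngtP i j) => // [lt_ij | lt_ji].
- by move: (not_used j); rewrite -eq_key key_representative_used.
- by move: (not_used i); rewrite eq_key key_representative_used.
Qed.

End DistinctRepresentatives.

Lemma exists_distinct_representatives (I K : eqType) (key : I -> K)
    (S : nat -> seq I) :
  (forall j, uniq (map key (S j))) -> (forall j, j < size (S j)) ->
  exists r : nat -> I, (forall j, r j \in S j) /\ injective (key \o r).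
Proof.
move=> S_uniq S_large; case: (S 0) (S_large 0) => [|x0 _] // _.
exists (representative _ _ key S x0); split.
- exact: representative_mem S_uniq S_large.
- exact: key_representative_inj S_uniq S_large.
Qed.

Lemma extend_injective_selection {T : eqType} {F : nat -> seq T}
    {key : nat -> nat} {val : nat -> T} :
  (forall n, F n != [::]) -> injective key -> (forall j, val j \in F (key j)) ->
  exists f : nat -> T, (forall n, f n \in F n) /\ forall j, f (key j) = val j.
Proof.
move=> F_ne key_inj val_F.
have [f f_spec] : exists f : nat -> T,
    forall n, f n \in F n /\ forall j, key j = n -> f n = val j.
  apply: (choice (fun n y => y \in F n /\ forall j, key j = n -> y = val j)).
  move=> n; have [[j <-] | no_key] := classic (exists j, key j = n).
    by exists (val j); split=> // i /key_inj ->.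
  case: (F n) (F_ne n) => [|y r] // _; exists y; split; first exact: mem_head.
  by move=> j key_j; case: no_key; exists j.
by exists f; split=> [n | j]; [exact: (f_spec n).1 | exact: (f_spec _).2].
Qed.

Definition transversal {T : eqType} (F : nat -> seq T) (s : seq (nat * T)) : bool :=
  uniq (unzip1 s) && all (fun p => p.2 \in F p.1) s.

Lemma exists_transversal {T : eqType} {F : nat -> seq T} {P : pred T} :
  (forall m, exists n, m <= n /\ has P (F n)) ->
  forall k, exists s, [/\ transversal F s, size s = k & all (P \o snd) s].
Proof.
move=> P_often; elim=> [|k [s [tr_s size_s P_s]]]; first by exists [::].
have [n [max_lt_n /hasP[x x_Fn Px]]] := P_often (\max_(i <- unzip1 s) i).+1.
exists ((n, x) :: s); split=> /=; [|by rewrite size_s | by rewrite Px].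
move: tr_s; rewrite /transversal /= x_Fn => /andP[-> ->]; rewrite !andbT.
apply: contraTN max_lt_n => n_s; rewrite -ltnNge ltnS.
exact: bigmaxn_sup_seq n_s isT (leqnn n).
Qed.

Local Open Scope order_scope.

Lemma sup_is_top_dominated {d : Order.disp_t} {T : tbLatticeType d}
    (A B : T -> Prop) :
  (forall a, A a -> exists2 b, B b & a <= b) -> sup_is_top A -> sup_is_top B.
Proof.
move=> dom [_ topA]; split=> [b _ | y ubB]; first exact: lex1.
by apply: topA => a /dom[b /ubB b_y a_b]; exact: le_trans a_b b_y.
Qed.

Lemma prime_elt_bigmeet_le {d : Order.disp_t} {T : tbLatticeType d} {q : T}
    {J : eqType} {r : seq J} {G : J -> T} :
  prime_elt q -> \meet_(i <- r) G i <= q -> exists2 i, i \in r & G i <= q.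
Proof.
case=> q_ne_top q_prime; elim: r => [|i r IHr].
  by rewrite big_nil le1x (negbTE q_ne_top).
rewrite big_cons => /q_prime[Gi_q | /IHr[k k_r Gk_q]].
  by exists i; rewrite ?mem_head.
by exists k; rewrite ?in_cons ?k_r ?orbT.
Qed.

Lemma bigjoin_not_le_has {d : Order.disp_t} {T : bLatticeType d} (r : seq T)
    (q : T) :
  ~~ (\join_(x <- r) x <= q) -> has (fun x => ~~ (x <= q)) r.
Proof.
apply: contraNT => /hasPn all_le; rewrite big_seq.
by apply: joins_le => x /all_le; rewrite negbK.
Qed.

Lemma prime_elt_above {d : Order.disp_t} {T : tbLatticeType d} :
  pre_Pawlikowski T -> forall y : T, y != \top -> exists q, prime_elt q /\ y <= q.
Proof.
move=> HP y y_ne_top.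
by have [|q [q_prime [y_q _]]] := HP \top y; [rewrite le1x | exists q].
Qed.

Definition transversal_meet {d : Order.disp_t} {T : tbLatticeType d}
    (F : nat -> seq T) (j : nat) (x : T) : Prop :=
  exists s, [/\ transversal F s, size s = j.+1 & x = \meet_(p <- s) p.2].

Lemma transversal_meet_sup_top {d : Order.disp_t} {T : tbLatticeType d}
    {F : nat -> seq T} :
  pre_Pawlikowski T ->
  (forall p : T, p != \top ->
     forall m, exists n, (m <= n)%N /\ ~~ (\join_(x <- F n) x <= p)) ->
  forall j, sup_is_top (transversal_meet F j).
Proof.
move=> HP HF j; split=> [x _ | y ub_y]; first exact: lex1.
apply: contraT; rewrite le1x => /(prime_elt_above HP)[q [q_prime y_q]].
have q_often m : exists n, (m <= n)%N /\ has (fun x => ~~ (x <= q)) (F n).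
  by have [n [le_mn /bigjoin_not_le_has]] := HF q q_prime.1 m; exists n.
have [s [tr_s size_s s_not_le]] := exists_transversal q_often j.+1.
have meet_le_q : \meet_(p <- s) p.2 <= q by apply: le_trans (ub_y _ _) y_q; exists s.
have [p p_s p_le_q] := prime_elt_bigmeet_le q_prime meet_le_q.
by move: (allP s_not_le p p_s); rewrite /= p_le_q.
Qed.

Theorem lemma2p3 (d : Order.disp_t) (T : tbLatticeType d)
  (HP : pre_Pawlikowski T) (HS : S1_V1_V1 T)
  (F : nat -> seq T) (Fne : forall n, F n != [::])
  (HF : forall p : T, p != \top ->
        forall m : nat, exists n : nat, (m <= n)%N /\ ~~ ((\join_(x <- F n) x) <= p)) :
  exists f : nat -> T, (forall n, f n \in F n) /\
    sup_is_top (fun x => exists n, x = f n).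
Proof.
have [a [a_meet a_top]] := HS _ (transversal_meet_sup_top HP HF).
have [s s_spec] := choice _ a_meet.
have [g [g_s g_inj]] : exists g : nat -> nat * T,
    (forall j, g j \in s j) /\ injective (fst \o g).
  apply: exists_distinct_representatives => j; case: (s_spec j).
  - by case/andP.
  - by move=> _ ->.
have g_F j : (g j).2 \in F (g j).1.
  by case: (s_spec j) => /andP[_ /allP all_F] _ _; exact: all_F _ (g_s j).
have [f [f_F f_g]] := extend_injective_selection Fne g_inj g_F.
exists f; split=> //.
apply: sup_is_top_dominated a_top => _ [j ->].
exists (f (g j).1); first by exists (g j).1.
have [_ _ ->] := s_spec j; rewrite (f_g j).
exact: meets_inf_seq (g_s j) isT.
Qed.
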